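(* If $M$ is a probabilistic epistemic structure over $\Phi$ and $M_c$ is the corresponding common-interpretation structure over $\Phi\times N$, then for every formula $\varphi$, state $\omega$ and player $i$: (a) $(M,\omega,i)\models^{\mathit{in}}\varphi$ iff $(M_c,\omega)\models\varphi_i^{\mathit{in}}$; (b) $(M,\omega,i)\models^{\mathit{out}}\varphi$ iff $(M_c,\omega)\models\varphi_i^{\mathit{out}}$.
   Context: Setting: $N=\{1,\dots,n\}$ players; formulas are built from primitive propositions by negation, conjunction, operators $CB_G$ ($G\subseteq N$ nonempty) and probability formulas $a_1\Pr_j(\varphi_1)+\dots+a_k\Pr_j(\varphi_k)\ge b$ ($a_l,b\in\mathbb{Q}$); $B_j\varphi$ abbreviates $\Pr_j(\varphi)=1$, $EB^1_G\varphi=\bigwedge_{j\in G}B_j\varphi$, $EB^{m+1}_G\varphi=EB^m_GEB^1_G\varphi$. An epistemic probability structure $M=(\Omega,(\Pi_j)_{j\in N},(\mathcal{P}_j)_{j\in N},(\pi_j)_{j\in N})$ over $\Phi$ has partitions $\Pi_i$ of $\Omega$, probability spaces $\mathcal{P}_i(\omega)=(\Omega_{i,\omega},\mathcal{F}_{i,\omega},\mu_{i,\omega})$, and player-specific truth assignments $\pi_i(\omega)$ to $\Phi$, satisfying: $\Omega_{i,\omega}=\Pi_i(\omega)$; $\mathcal{P}_i$ constant on cells of $\Pi_i$; $\Pi_i(\omega)\cap\Pi_j(\omega')\in\mathcal{F}_{i,\omega}$; and $\Pi_i(\omega)\cap[[p]]_i\in\mathcal{F}_{i,\omega}$. Outermost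 scope: $(M,\omega,i)\models^{\mathit{out}}p$ iff $\pi_i(\omega)(p)=\mathbf{true}$; negation/conjunction as usual; $(M,\omega,i)\models^{\mathit{out}}\sum_la_l\Pr_j(\varphi_l)\ge b$ iff $\sum_la_l\mu_{j,\omega}([[\varphi_l]]^{\mathit{out}}_i\cap\Omega_{j,\omega})\ge b$ with $[[\psi]]^{\mathit{out}}_i=\{\omega:(M,\omega,i)\models^{\mathit{out}}\psi\}$; $CB_G\varphi$ holds iff $EB^k_G\varphi$ holds for all $k\ge1$. Innermost scope $\models^{\mathit{in}}$ is the same except that probability formulas about $j$ use $[[\varphi_l]]^{\mathit{in}}_j$. The corresponding common-interpretation structure is $M_c=(\Omega,(\Pi_j),(\mathcal{P}_j),\pi)$ over primitive propositions $\Phi\times N$, with $\pi(\omega)((p,i))=\pi_i(\omega)(p)$; truth in $M_c$ is agent-independent: $(M_c,\omega)\models(p,i)$ iff $\pi(\omega)((p,i))=\mathbf{true}$, and $(M_c,\omega)\models\sum_la_l\Pr_j(\varphi_l)\ge b$ iff $\sum_la_l\mu_{j,\omega}([[\varphi_l]]\cap\Omega_{j,\omega})\ge b$. Translations, defined by induction: $p_i^{\mathit{in}}=(p,i)$; $(\neg\psi)_i^{\mathit{in}}=\neg\psi_i^{\mathit{in}}$; $(\psi\wedge\psi')_i^{\mathit{in}}=\psi_i^{\mathit{in}}\wedge\psi'^{\mathit{in}}_i$; $(\sum_la_l\Pr_j(\varphi_l)\ge b)_i^{\mathit{in}}=\sum_la_l\Pr_j((\varphi_l)_j^{\mathit{in}})\ge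 b$; $(CB_G\psi)_i^{\mathit{in}}=CB_G(\bigwedge_{j\in G}B_j\psi_j^{\mathit{in}})$. Similarly $p_i^{\mathit{out}}=(p,i)$; negation and conjunction componentwise; $(\sum_la_l\Pr_j(\varphi_l)\ge b)_i^{\mathit{out}}=\sum_la_l\Pr_j((\varphi_l)_i^{\mathit{out}})\ge b$; $(CB_G\psi)_i^{\mathit{out}}=CB_G(\psi_i^{\mathit{out}})$. *)

From HB Require Import structures.
From mathcomp Require Import all_boot all_order all_algebra.
From mathcomp Require Import boolp classical_sets reals topology normedtype sequences.
Set Implicit Arguments. Unset Strict Implicit. Unset Printing Implicit Defensive.
Import Order.TTheory GRing.Theory Num.Theory numFieldNormedType.Exports.
Local Open Scope classical_set_scope.
Local Open Scope ring_scope.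

(* PrLin j [:: (a_1,phi_1); ...; (a_k,phi_k)] b  is                     *)
(*   a_1 Pr_j(phi_1) + ... + a_k Pr_j(phi_k) >= b.                     *)
Inductive formula (n : nat) (P : Type) : Type :=
| Prim of P
| Neg of formula n P
| And of formula n P & formula n P
| PrLin of 'I_n & seq (rat * formula n P) & rat
| CB of {set 'I_n} & formula n P.

Arguments Prim {n P}.
Arguments Neg {n P}.
Arguments And {n P}.
Arguments PrLin {n P}.
Arguments CB {n P}.

Fixpoint wf n P (phi : formula n P) : Prop :=
  match phi with
  | Prim _ => True
  | Neg psi => wf psi
  | And psi chi => wf psi /\ wf chi
  | PrLin _ ts _ => foldr (fun t acc => wf t.2 /\ acc) True ts
  | CB G psi => (0 < #|G|)%N /\ wf psi
  end.

(* Abbreviations: B_j phi := Pr_j(phi) = 1, i.e. Pr_j(phi) >= 1 /\ -Pr_j(phi) >= -1. *)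
Definition Bf n P (j : 'I_n) (phi : formula n P) : formula n P :=
  And (PrLin j [:: (1%R, phi)] 1%R) (PrLin j [:: ((-1)%R, phi)] (-1)%R).

Definition ftrue n P (phi : formula n P) : formula n P := Neg (And phi (Neg phi)).

(* finite conjunction of a list of formulas (d only used for the empty list) *)
Fixpoint bigconj n P (d : formula n P) (l : seq (formula n P)) : formula n P :=
  match l with
  | [::] => ftrue d
  | [:: x] => x
  | x :: l' => And x (bigconj d l')
  end.

(* cell i w   = Pi_i(w)  (= Omega_{i,w}, the sample space)             *)
(* sfield i w = F_{i,w},  prob i w = mu_{i,w}                           *)
Record pframe (R : realType) (n : nat) (Omega : Type) := PFrame {
  cell : 'I_n -> Omega -> set Omega;
  sfield : 'I_n -> Omega -> set (set Omega);
  prob : 'I_n -> Omega -> set Omega -> R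
}.

Section Structures.
Variables (R : realType) (n : nat) (Omega : Type).

Definition is_sigma_algebra_on (D : set Omega) (F : set (set Omega)) : Prop :=
  [/\ (forall A, F A -> A `<=` D),
      F D,
      (forall A, F A -> F (D `\` A)) &
      (forall A : nat -> set Omega, (forall k, F (A k)) -> F (\bigcup_k A k))].

Definition is_probability_on (D : set Omega) (F : set (set Omega))
    (mu : set Omega -> R) : Prop :=
  [/\ (forall A, F A -> 0 <= mu A),
      mu D = 1 &
      (forall A : nat -> set Omega, (forall k, F (A k)) -> trivIset setT A ->
         (fun m => \sum_(k < m) mu (A k)) @ \oo --> mu (\bigcup_k A k))].

Record is_epist_struct (Phi : Type) (M : pframe R n Omega)
    (pi : 'I_n -> Omega -> Phi -> bool) : Prop := {
  (* Pi_i is a partition of Omega; Pi_i(w) is the cell containing w *)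
  es_cell_refl : forall i w, cell M i w w;
  es_cell_eq : forall i w w', cell M i w w' -> cell M i w' = cell M i w;
  es_sigma : forall i w, is_sigma_algebra_on (cell M i w) (sfield M i w);
  es_prob : forall i w, is_probability_on (cell M i w) (sfield M i w) (prob M i w);
  es_const : forall i w w', cell M i w w' ->
     sfield M i w' = sfield M i w /\ prob M i w' = prob M i w;
  es_meas_cell : forall i j w w', sfield M i w (cell M i w `&` cell M j w');
  es_meas_prim : forall i w p, sfield M i w (cell M i w `&` [set v | pi i v p])
}.

Definition lin_sem (M : pframe R n Omega) (j : 'I_n) (w : Omega)
    (ts : seq (rat * set Omega)) (b : rat) : Prop :=
  ratr b <= \sum_(t <- ts) ratr t.1 * prob M j w (t.2 `&` cell M j w).

Definition B_sem (M : pframe R n Omega) (j : 'I_n) (A : set Omega) : set Omega :=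
  [set w | lin_sem M j w [:: (1%R, A)] 1%R /\ lin_sem M j w [:: ((-1)%R, A)] (-1)%R].

Definition EB1_sem (M : pframe R n Omega) (G : {set 'I_n}) (A : set Omega) : set Omega :=
  [set w | forall j, j \in G -> B_sem M j A w].

(* semantics of EB^1_G in the innermost scope: agent-indexed truth sets *)
Definition EB1_in_sem (M : pframe R n Omega) (G : {set 'I_n})
    (T : 'I_n -> set Omega) : 'I_n -> set Omega :=
  fun _ => [set w | forall j, j \in G -> B_sem M j (T j) w].

Fixpoint den_out (Phi : Type) (M : pframe R n Omega) (pi : 'I_n -> Omega -> Phi -> bool)
    (phi : formula n Phi) (i : 'I_n) : set Omega :=
  match phi with
  | Prim p => [set w | pi i w p]
  | Neg psi => ~` den_out M pi psi i
  | And psi chi => den_out M pi psi i `&` den_out M pi chi i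
  | PrLin j ts b =>
      [set w | lin_sem M j w (map (fun t => (t.1, den_out M pi t.2 i)) ts) b]
  | CB G psi =>
      [set w | forall k, (0 < k)%N -> iter k (EB1_sem M G) (den_out M pi psi i) w]
  end.

Fixpoint den_in (Phi : Type) (M : pframe R n Omega) (pi : 'I_n -> Omega -> Phi -> bool)
    (phi : formula n Phi) : 'I_n -> set Omega :=
  match phi with
  | Prim p => fun i => [set w | pi i w p]
  | Neg psi => fun i => ~` den_in M pi psi i
  | And psi chi => fun i => den_in M pi psi i `&` den_in M pi chi i
  | PrLin j ts b => fun _ =>
      [set w | lin_sem M j w (map (fun t => (t.1, den_in M pi t.2 j)) ts) b]
  | CB G psi => fun i =>
      [set w | forall k, (0 < k)%N -> iter k (EB1_in_sem M G) (den_in M pi psi) i w]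
  end.

Fixpoint den_c (P : Type) (M : pframe R n Omega) (pic : Omega -> P -> bool)
    (phi : formula n P) : set Omega :=
  match phi with
  | Prim p => [set w | pic w p]
  | Neg psi => ~` den_c M pic psi
  | And psi chi => den_c M pic psi `&` den_c M pic chi
  | PrLin j ts b =>
      [set w | lin_sem M j w (map (fun t => (t.1, den_c M pic t.2)) ts) b]
  | CB G psi =>
      [set w | forall k, (0 < k)%N -> iter k (EB1_sem M G) (den_c M pic psi) w]
  end.

Definition sat_out (Phi : Type) (M : pframe R n Omega) (pi : 'I_n -> Omega -> Phi -> bool)
  (w : Omega) (i : 'I_n) (phi : formula n Phi) : Prop := den_out M pi phi i w.
Definition sat_in (Phi : Type) (M : pframe R n Omega) (pi : 'I_n -> Omega -> Phi -> bool)
  (w : Omega) (i : 'I_n) (phi : formula n Phi) : Prop := den_in M pi phi i w.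
Definition sat_c (P : Type) (M : pframe R n Omega) (pic : Omega -> P -> bool)
  (w : Omega) (phi : formula n P) : Prop := den_c M pic phi w.

(* the truth assignment of the corresponding common-interpretation structure *)
Definition common_pi (Phi : Type) (pi : 'I_n -> Omega -> Phi -> bool) :
  Omega -> Phi * 'I_n -> bool := fun w pj => pi pj.2 w pj.1.

End Structures.

Fixpoint tr_in n (Phi : Type) (phi : formula n Phi) (i : 'I_n) : formula n (Phi * 'I_n) :=
  match phi with
  | Prim p => Prim (p, i)
  | Neg psi => Neg (tr_in psi i)
  | And psi chi => And (tr_in psi i) (tr_in chi i)
  | PrLin j ts b => PrLin j (map (fun t => (t.1, tr_in t.2 j)) ts) b
  | CB G psi => CB G (bigconj (tr_in psi i) [seq Bf j (tr_in psi j) | j <- enum G])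
  end.

Fixpoint tr_out n (Phi : Type) (phi : formula n Phi) (i : 'I_n) : formula n (Phi * 'I_n) :=
  match phi with
  | Prim p => Prim (p, i)
  | Neg psi => Neg (tr_out psi i)
  | And psi chi => And (tr_out psi i) (tr_out chi i)
  | PrLin j ts b => PrLin j (map (fun t => (t.1, tr_out t.2 i)) ts) b
  | CB G psi => CB G (tr_out psi i)
  end.

From mathcomp Require Import all_boot all_order all_algebra.
From mathcomp Require Import boolp classical_sets reals topology normedtype sequences.
Set Implicit Arguments. Unset Strict Implicit. Unset Printing Implicit Defensive.
Import Order.TTheory GRing.Theory Num.Theory numFieldNormedType.Exports.
Local Open Scope classical_set_scope.
Local Open Scope ring_scope.

(* The outermost translation is a mere relabelling of primitive propositions.
   For the innermost one, the only real case is CB_G: the innermost CB_G psi at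
   i holds iff EB^k_G of S := /\_{j in G} B_j [[psi]]_j holds for all k >= 0,
   whereas the translation asks it only for k >= 1.  Both agree because
   EB^1_G S is contained in S, by introspection: B_j is constant on the cells
   of Pi_j, and B_j A forces A to meet the cell since mu(empty) = 0. *)

Lemma probability_on_set0 (R : realType) (Omega : Type) (D : set Omega)
    (F : set (set Omega)) (mu : set Omega -> R) :
  is_sigma_algebra_on D F -> is_probability_on D F mu -> mu set0 = 0.
Proof.
move=> [_ FD FC _] [_ _ mu_sigma_add].
have F0 : F set0 by rewrite -(setDv D); exact: FC.
have := mu_sigma_add (fun=> set0) (fun=> F0) (@trivIset_set0 nat Omega setT).
rewrite bigcup_const // => partial_sums_cvg.
set c := mu set0 in partial_sums_cvg *.
have partial_sumsE : (fun m => \sum_(k < m) c) = (fun m : nat => c *+ m).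
  by apply: funext => m; rewrite sumr_const card_ord.
rewrite partial_sumsE in partial_sums_cvg.
(* consecutive partial sums differ by c, and their differences tend to c - c *)
have diff_cvg : (fun m : nat => c *+ m.+1 - c *+ m) @ \oo --> c - c.
  by apply: cvgB => //; rewrite cvg_shiftS.
have diffE : (fun m : nat => c *+ m.+1 - c *+ m) = fun=> c.
  by apply: funext => m; rewrite mulrS addrK.
rewrite diffE subrr in diff_cvg.
apply: (@cvg_unique _ (@Rhausdorff R) ((fun _ : nat => c) @ \oo)); [exact: cvg_cst | exact: diff_cvg].
Qed.

Fixpoint formula_deep_ind n P (Q : formula n P -> Prop)
  (HP : forall p, Q (Prim p)) (HN : forall f, Q f -> Q (Neg f))
  (HA : forall f g, Q f -> Q g -> Q (And f g))
  (HL : forall j ts b, foldr (fun t acc => Q t.2 /\ acc) True ts -> Q (PrLin j ts b))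
  (HC : forall G f, Q f -> Q (CB G f)) (phi : formula n P) : Q phi :=
  match phi with
  | Prim p => HP p
  | Neg f => HN f (formula_deep_ind HP HN HA HL HC f)
  | And f g => HA f g (formula_deep_ind HP HN HA HL HC f) (formula_deep_ind HP HN HA HL HC g)
  | PrLin j ts b => HL j ts b
      ((fix go (ts : seq (rat * formula n P)) : foldr (fun t acc => Q t.2 /\ acc) True ts :=
         match ts with
         | [::] => I
         | (a, f) :: ts' => conj (formula_deep_ind HP HN HA HL HC f) (go ts')
         end) ts)
  | CB G f => HC G f (formula_deep_ind HP HN HA HL HC f)
  end.

Lemma eq_map_foldr (T U : Type) (P : T -> Prop) (f g : T -> U) (s : seq T) :
  (forall t, P t -> f t = g t) -> foldr (fun t acc => P t /\ acc) True s ->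
  map f s = map g s.
Proof. by move=> fg; elim: s => //= t s IHs [/fg -> /IHs ->]. Qed.

Lemma iter_stable_pos (T : Type) (f : set T -> set T) (S : set T) :
  f S `<=` S ->
  [set w | forall k, (0 < k)%N -> iter k f S w] = [set w | forall k, iter k f S w].
Proof.
move=> fS_sub; apply/seteqP; split => w /= Sw; last by move=> k _; exact: Sw.
by case=> [|k]; [apply: fS_sub; exact: (Sw 1%N) | exact: Sw].
Qed.

Section Translations.
Variables (R : realType) (n : nat) (Omega Phi : Type)
    (M : pframe R n Omega) (pi : 'I_n -> Omega -> Phi -> bool).

Lemma den_c_bigconj (P : Type) (pic : Omega -> P -> bool) (d : formula n P)
    (f : 'I_n -> formula n P) (l : seq 'I_n) :
  den_c M pic (bigconj d (map f l)) = [set w | forall j, j \in l -> den_c M pic (f j) w].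
Proof.
elim: l => [|x [|y l] IHl].
- by apply/seteqP; split => w // _ [].
- apply/seteqP; split => w /=; last by apply; rewrite mem_seq1.
  by move=> fx_w j; rewrite mem_seq1 => /eqP ->.
- rewrite map_cons [bigconj _ _]/= [den_c _ _ (And _ _)]/= IHl.
  apply/seteqP; split => w /=.
  + move=> [fx_w fl_w] j; rewrite inE => /orP [/eqP -> //|]; exact: fl_w.
  + move=> fl_w; split; first by apply: fl_w; rewrite inE eqxx.
    by move=> k lk; apply: fl_w; rewrite inE lk orbT.
Qed.

Lemma den_out_tr_out (phi : formula n Phi) (i : 'I_n) :
  den_out M pi phi i = den_c M (common_pi pi) (tr_out phi i).
Proof.
elim/formula_deep_ind: phi i => [p|f IHf|f g IHf IHg|j ts b IHts|G f IHf] i /=.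
- by [].
- by rewrite IHf.
- by rewrite IHf IHg.
- by rewrite -map_comp (eq_map_foldr (fun t ts_t => congr1 (pair t.1) (ts_t i)) IHts).
- by rewrite IHf.
Qed.

Lemma iter_EB1_in_sem (G : {set 'I_n}) (T : 'I_n -> set Omega) (k : nat) (i : 'I_n) :
  iter k.+1 (EB1_in_sem M G) T i = iter k (EB1_sem M G) (EB1_in_sem M G T i).
Proof.
elim: k i => [//|k IHk] i.
rewrite iterS (_ : iter k.+1 _ T = fun=> iter k (EB1_sem M G) (EB1_in_sem M G T i)) //.
by apply: funext => i'; exact: IHk.
Qed.

Hypothesis M_epist : is_epist_struct M pi.

Lemma B_sem_meets_cell (j : 'I_n) (A : set Omega) (w : Omega) :
  B_sem M j A w -> exists2 w', cell M j w w' & A w'.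
Proof.
move=> [+ _]; rewrite /lin_sem big_seq1 /= !rmorph1 mul1r => prob_ge1.
apply: contrapT => no_meet.
have disj : A `&` cell M j w = set0.
  by apply/seteqP; split => // v [Av cv]; apply: no_meet; exists v.
move: prob_ge1; rewrite disj.
by rewrite (probability_on_set0 (es_sigma M_epist j w) (es_prob M_epist j w)) ler10.
Qed.

Lemma B_sem_cell_invariant (j : 'I_n) (A : set Omega) (w w' : Omega) :
  cell M j w w' -> B_sem M j A w' -> B_sem M j A w.
Proof.
move=> ww'; have [_ prob_eq] := es_const M_epist ww'.
by rewrite /B_sem /lin_sem /= (es_cell_eq M_epist ww') prob_eq.
Qed.

Lemma B_sem_introspection (j : 'I_n) (A X : set Omega) :
  A `<=` B_sem M j X -> B_sem M j A `<=` B_sem M j X.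
Proof.
move=> AX w /B_sem_meets_cell [w' ww' Aw'].
exact: B_sem_cell_invariant ww' (AX _ Aw').
Qed.

Lemma EB1_sem_in_sub (G : {set 'I_n}) (T : 'I_n -> set Omega) (i : 'I_n) :
  EB1_sem M G (EB1_in_sem M G T i) `<=` EB1_in_sem M G T i.
Proof.
move=> w EB_w j jG; apply: B_sem_introspection (EB_w j jG).
by move=> v; apply.
Qed.

Lemma den_in_tr_in (phi : formula n Phi) (i : 'I_n) :
  den_in M pi phi i = den_c M (common_pi pi) (tr_in phi i).
Proof.
elim/formula_deep_ind: phi i => [p|f IHf|f g IHf IHg|j ts b IHts|G f IHf] i /=.
- by [].
- by rewrite IHf.
- by rewrite IHf IHg.
- by rewrite -map_comp (eq_map_foldr (fun t ts_t => congr1 (pair t.1) (ts_t j)) IHts).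
- have conjE : den_c M (common_pi pi)
      (bigconj (tr_in f i) [seq Bf j (tr_in f j) | j <- enum G]) =
      EB1_in_sem M G (den_in M pi f) i.
    rewrite den_c_bigconj; apply/seteqP; split => w /= Sw j.
      by rewrite -mem_enum IHf => /Sw.
    by rewrite mem_enum -IHf => /Sw.
  rewrite conjE iter_stable_pos; last exact: (@EB1_sem_in_sub G (den_in M pi f) i).
  apply/seteqP; split => w /= EB_w k.
    by have := EB_w k.+1 erefl; rewrite iter_EB1_in_sem.
  by case: k => // k _; rewrite iter_EB1_in_sem; exact: EB_w.
Qed.

End Translations.

Theorem theorem2 (R : realType) (n : nat) (Omega Phi : Type)
    (M : pframe R n Omega) (pi : 'I_n -> Omega -> Phi -> bool) :
  is_epist_struct M pi ->
  forall (phi : formula n Phi) (w : Omega) (i : 'I_n), wf phi ->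
    (sat_in M pi w i phi <-> sat_c M (common_pi pi) w (tr_in phi i)) /\
    (sat_out M pi w i phi <-> sat_c M (common_pi pi) w (tr_out phi i)).
Proof.
move=> M_epist phi w i _.
by rewrite /sat_in /sat_out /sat_c (den_in_tr_in M_epist) den_out_tr_out.
Qed.
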